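(* Let $T$ be a tree with $n$ vertices. The straight-line drawing of $T$ produced by Algorithm 2 is monotone (and planar), and every vertex is placed at an integer point $(x,y)$ with $|x|\le\frac{n-\mathrm{odd}(n)}{2}$ and $0\le y\le\frac{n-\mathrm{odd}(n)}{2}$. Hence the drawing fits on a grid of $n\times\frac{n+1}{2}$ points when $n$ is odd and of $(n+1)\times(\frac{n}{2}+1)$ points when $n$ is even.
   Context: A vertex $r$ of an $n$-vertex tree $T$ is a gravity root if every connected component of $T\setminus r$ has at most $\frac{n}{2}$ vertices. $\mathrm{odd}(n)=1$ if $n$ is odd, $0$ otherwise. $T_v$ is the subtree rooted at $v$, $|T_v|$ its number of vertices. A grid of $a\times b$ points means $a$ consecutive integer $x$-values and $b$ consecutive integer $y$-values. Strategy 1: for a non-leaf vertex $u$ with assigned $a_1(u)<a_2(u)$ and children $v_1,\dots,v_m$ in order, set $a_1(v_1)=a_1(u)$, $a_1(v_i)=a_2(v_{i-1})$ for $1<i\le m$, and $a_2(v_i)=a_1(v_i)+(a_2(u)-a_1(u))\cdot\frac{|T_{v_i}|}{|T_u|-1}$. Point rule $P_1(\theta_1,\theta_2)$ for $0\le\theta_1<\theta_2\le\frac{\pi}{2}$, with $d=\lceil\frac{1}{\theta_2-\theta_1}\rceil$: (i) if $\theta_2-\theta_1>\frac{\pi}{4}$: $(1,1)$; (ii) if $\arctan(\frac12)<\theta_2-\theta_1\le\frac{\pi}{4}$: $(1,2)$ if $\theta_1\ge\frac{\pi}{4}$, $(1,1)$ if $\arctan(\frac12)\le\theta_1<\frac{\pi}{4}$,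 $(2,1)$ if $\theta_1<\arctan(\frac12)$; (iii) if $\theta_2-\theta_1\le\arctan(\frac12)$: $(d,\lfloor\tan(\theta_1)d+1\rfloor)$ if $\theta_2\le\frac{\pi}{4}$, $(1,1)$ if $\theta_1<\frac{\pi}{4}<\theta_2$, $(\lfloor\tan(\frac{\pi}{2}-\theta_2)d+1\rfloor,d)$ if $\theta_1\ge\frac{\pi}{4}$. Point rule $P_2(\beta_1,\beta_2)$ for $0\le\beta_1<\beta_2\le\pi$: $(0,1)$ if $\beta_1<\frac{\pi}{2}<\beta_2$; $P_1(\beta_1,\beta_2)$ if $\beta_2\le\frac{\pi}{2}$; $(-x,y)$ with $(x,y)=P_1(\pi-\beta_2,\pi-\beta_1)$ if $\beta_1\ge\frac{\pi}{2}$. Algorithm 2 (input: a tree $T$, possibly with a cyclic order of neighbors at each vertex): choose a gravity root $r$ and root $T$ at $r$ (children ordered according to the given embedding, if any); set $a_1(r)=0$, $a_2(r)=\pi$, assign angles to all other vertices top-down by Strategy 1; place $r$ at $(0,0)$; top-down, place each child $v$ of an already placed vertex $u$ at (position of $u$) $+P_2(a_1(v),a_2(v))$. A path $p_0,\dots,p_k$ in a straight-line drawing is monotone if there is a line $\ell$ such that the orthogonal projections of $p_0,\dots,p_k$ onto $\ell$ appear along $\ell$ in this order; a drawing is monotone if every pair of vertices is joined by a monotone path. *)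

From Stdlib Require Import Reals ZArith.
From mathcomp Require Import all_boot.

Set Implicit Arguments.
Unset Strict Implicit.
Unset Printing Implicit Defensive.

Local Open Scope R_scope.

(* Int_part x = up x - 1 is the floor of x. *)
Definition Zfloor (x : R) : Z := Int_part x.
Definition Zceil (x : R) : Z := (- Int_part (- x))%Z.

Definition P1 (t1 t2 : R) : Z * Z :=
  let w := (t2 - t1) in
  let d := Zceil (/ w) in
  if Rlt_dec (PI / 4) w then (1, 1)%Z
  else if Rlt_dec (atan (1 / 2)) w then
    (if Rle_dec (PI / 4) t1 then (1, 2)%Z
     else if Rle_dec (atan (1 / 2)) t1 then (1, 1)%Z
     else (2, 1)%Z)
  else if Rle_dec t2 (PI / 4) then (d, Zfloor (tan t1 * IZR d + 1))
  else if Rlt_dec t1 (PI / 4) then (1, 1)%Z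
  else (Zfloor (tan (PI / 2 - t2) * IZR d + 1), d).

Definition P2 (b1 b2 : R) : Z * Z :=
  if (if Rlt_dec b1 (PI / 2) then (if Rlt_dec (PI / 2) b2 then true else false) else false)
  then (0, 1)%Z
  else if Rle_dec b2 (PI / 2) then P1 b1 b2
  else let p := P1 (PI - b2) (PI - b1) in ((- p.1)%Z, p.2).

Definition is_tree (V : finType) (adj : rel V) : Prop :=
  symmetric adj /\ irreflexive adj /\ (forall x y : V, connect adj x y) /\
  ~ (exists c : seq V, [/\ uniq c, (3 <= size c)%N & cycle adj c]).

Definition del_rel (V : finType) (adj : rel V) (r : V) : rel V :=
  [rel x y | [&& adj x y, x != r & y != r]].

(* r is a gravity root: every connected component of T \ r has at most n/2
   vertices (the component of v != r is the set of w connected to v in T \ r). *)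
Definition gravity_root (V : finType) (adj : rel V) (r : V) : Prop :=
  forall v : V, v != r ->
    (#|[pred w | connect (del_rel adj r) v w]| * 2 <= #|V|)%N.

Definition rooted_at (V : finType) (adj : rel V) (r : V) (par : V -> V) : Prop :=
  par r = r /\ (forall v, v != r -> adj v (par v)) /\ (forall v, fconnect par v r).

(* ch u is an ordering (any order, e.g. the one given by an embedding)
   of the children of u *)
Definition child_order (V : finType) (r : V) (par : V -> V) (ch : V -> seq V) : Prop :=
  forall u, uniq (ch u) /\ (forall v, (v \in ch u) = (v != r) && (par v == u)).

Definition subtree_size (V : finType) (par : V -> V) (v : V) : nat :=
  #|[pred w | fconnect par w v]|.

Definition strategy1 (V : finType) (r : V) (par : V -> V) (ch : V -> seq V)
    (a1 a2 : V -> R) : Prop :=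
  a1 r = 0 /\ a2 r = PI /\
  forall u i, (i < size (ch u))%N ->
    let v := nth u (ch u) i in
    a1 v = (if i is j.+1 then a2 (nth u (ch u) j) else a1 u) /\
    a2 v = (a1 v + (a2 u - a1 u) *
              (INR (subtree_size par v) / INR (subtree_size par u - 1))).

Definition placement (V : finType) (r : V) (par : V -> V) (a1 a2 : V -> R)
    (pos : V -> Z * Z) : Prop :=
  pos r = (0, 0)%Z /\
  forall v, v != r ->
    pos v = (((pos (par v)).1 + (P2 (a1 v) (a2 v)).1)%Z,
             ((pos (par v)).2 + (P2 (a1 v) (a2 v)).2)%Z).

Definition algorithm2_drawing (V : finType) (adj : rel V) (pos : V -> Z * Z) : Prop :=
  exists (r : V) (par : V -> V) (ch : V -> seq V) (a1 a2 : V -> R),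
    [/\ gravity_root adj r, rooted_at adj r par, child_order r par ch,
        strategy1 r par ch a1 a2 & placement r par a1 a2 pos].

Definition rpt (p : Z * Z) : R * R := (IZR p.1, IZR p.2).

Definition on_segment (q a b : R * R) : Prop :=
  exists t : R, (0 <= t <= 1) /\
    q.1 = (a.1 + t * (b.1 - a.1)) /\ q.2 = (a.2 + t * (b.2 - a.2)).

Definition planar_drawing (V : finType) (adj : rel V) (pos : V -> Z * Z) : Prop :=
  injective pos /\
  forall (a b c d : V) (q : R * R), adj a b -> adj c d ->
    ~ ((a = c /\ b = d) \/ (a = d /\ b = c)) ->
    on_segment q (rpt (pos a)) (rpt (pos b)) ->
    on_segment q (rpt (pos c)) (rpt (pos d)) ->
    exists w, (w = a \/ w = b) /\ (w = c \/ w = d) /\ q = rpt (pos w).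

Definition monotone_path (V : finType) (pos : V -> Z * Z) (u : V) (p : seq V) : Prop :=
  exists dx dy : R, forall i, (i < size p)%N ->
    let a := rpt (pos (nth u (u :: p) i)) in
    let b := rpt (pos (nth u (u :: p) i.+1)) in
    (a.1 * dx + a.2 * dy < b.1 * dx + b.2 * dy).

Definition monotone_drawing (V : finType) (adj : rel V) (pos : V -> Z * Z) : Prop :=
  forall u v : V, exists p : seq V,
    path adj u p /\ last u p = v /\ monotone_path pos u p.

Definition fits_grid (V : finType) (pos : V -> Z * Z) (a b : nat) : Prop :=
  exists x0 y0 : Z, forall v : V,
    (x0 <= (pos v).1 < x0 + Z.of_nat a)%Z /\ (y0 <= (pos v).2 < y0 + Z.of_nat b)%Z.

(* Every vertex v receives an interval of angles [a1 v, a2 v] inside [0, PI]; the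
   intervals of children are disjoint subintervals of their parent's, of length
   proportional to subtree size.  The point rule puts each edge vector par v -> v
   at a grid direction strictly inside the interval of v.  Hence, for any fork w
   with children c1, c2, a direction normal to the boundary ray between the
   intervals of c1 and c2 strictly increases along the tree path from the subtree
   of c1 up to w and down into the subtree of c2; this gives monotone paths, and
   the same separation (or the y-axis, for nested edges) rules out crossings.
   For the grid size, the edge into v has coordinates at most g(a2 v - a1 v),
   where g(w) = max(1, PI / (2 w)); the potential |T_v| g(a2 v - a1 v) drops by
   at least g(a2 u - a1 u) along each edge u -> v and is at most n/2 at the
   children of the gravity root, so every coordinate is at most n/2. *)

From Pilot Require Import Defs.
From Stdlib Require Import Reals ZArith Lra Lia.
From mathcomp Require Import all_boot.

Set Implicit Arguments.
Unset Strict Implicit.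
Unset Printing Implicit Defensive.

Local Open Scope R_scope.

Lemma PI_gt3 : 3 < PI.
Proof. have := PI2_3_2; lra. Qed.

(* Taylor bounds on sin and cos reduce this to a polynomial inequality. *)
Lemma id_lt_tan x : 0 < x < PI / 2 -> x < tan x.
Proof.
move=> [x_gt0 x_lt].
have cos_gt0 : 0 < cos x by apply: cos_gt_0; lra.
have x_lt2 : x < 2 by have := PI_4; lra.
have [sin_lb _] := sin_bound x 0 ltac:(lra) ltac:(have := PI2_Rlt_PI; lra).
have [_ cos_ub] := cos_bound x 0 ltac:(have := PI_RGT_0; lra) ltac:(lra).
rewrite /sin_approx /sin_term /cos_approx /cos_term /= in sin_lb cos_ub.
rewrite /tan; apply: (Rmult_lt_reg_r (cos x)); first lra.
field_simplify; last lra.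
have : x * cos x <= x * (1 + -1 * (x * x) / 2 + x * (x * (x * x)) / 24).
  by apply: Rmult_le_compat_l; lra.
have : 0 < (x * x * x) * (8 - x * x).
  by apply: Rmult_lt_0_compat; [apply: Rmult_lt_0_compat; [nra | lra] | nra].
nra.
Qed.

Lemma tan_ge0 x : 0 <= x -> x < PI / 2 -> 0 <= tan x.
Proof.
move=> x_ge0 x_lt; case: (Req_dec x 0) => [->|x_neq0]; first by rewrite tan_0; lra.
by left; apply: tan_gt_0; lra.
Qed.

Lemma tan_addr_gt a w : 0 <= a -> 0 < w -> a + w < PI / 2 -> tan a + w < tan (a + w).
Proof.
move=> a_ge0 w_gt0 aw_lt; have := PI_RGT_0 => PI_gt0.
have cos_a : 0 < cos a by apply: cos_gt_0; lra.
have cos_w : 0 < cos w by apply: cos_gt_0; lra.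
have cos_aw : 0 < cos (a + w) by apply: cos_gt_0; lra.
have tan_a := tan_ge0 a_ge0 ltac:(lra).
have tan_w := id_lt_tan (conj w_gt0 (ltac:(lra) : w < PI / 2)).
have den_eq : 1 - tan a * tan w = cos (a + w) / (cos a * cos w).
  by rewrite cos_plus /tan; field; lra.
have den_gt0 : 0 < 1 - tan a * tan w.
  by rewrite den_eq; apply: Rdiv_lt_0_compat => //; nra.
rewrite tan_plus; try lra.
have : tan a + tan w <= (tan a + tan w) / (1 - tan a * tan w).
  apply: (Rmult_le_reg_r (1 - tan a * tan w)) => //.
  field_simplify; try lra; nra.
lra.
Qed.

Lemma lt_atan_tan t m : 0 <= t < PI / 2 -> tan t < m -> t < atan m.
Proof.
move=> t_range lt_tm; rewrite -(atan_tan t); last by have := PI_RGT_0; lra.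
exact: atan_increasing.
Qed.

Lemma atan_lt_tan t m : 0 <= t < PI / 2 -> m < tan t -> atan m < t.
Proof.
move=> t_range lt_mt; rewrite -(atan_tan t); last by have := PI_RGT_0; lra.
exact: atan_increasing.
Qed.

Definition atan_half := atan (1 / 2).

Lemma atan_half_gt0 : 0 < atan_half.
Proof. by rewrite /atan_half -atan_0; apply: atan_increasing; lra. Qed.

Lemma atan_half_lt_PI4 : atan_half < PI / 4.
Proof. by rewrite /atan_half -atan_1; apply: atan_increasing; lra. Qed.

Lemma atan_half_lt_half : atan_half < 1 / 2.
Proof.
rewrite -[X in _ < X](tan_atan (1 / 2)) -/atan_half; apply: id_lt_tan.
by have := atan_half_gt0; have := atan_half_lt_PI4; lra.
Qed.

(* tan (2 atan (1/2)) = 4/3 > 1 = tan (PI/4). *)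
Lemma PI4_lt_2atan_half : PI / 4 < atan_half + atan_half.
Proof.
have := atan_half_gt0; have := atan_half_lt_PI4; have := PI_RGT_0 => ? ? ?.
have tan2 : tan (atan_half + atan_half) = 4 / 3.
  rewrite tan_plus /atan_half ?tan_atan; first by field.
  all: try (apply: Rgt_not_eq; apply: cos_gt_0; rewrite -/atan_half; lra).
  lra.
case: (Rlt_le_dec (PI / 4) (atan_half + atan_half)) => // le2.
suff : tan (atan_half + atan_half) <= tan (PI / 4) by rewrite tan2 tan_PI4; lra.
case: (Req_dec (atan_half + atan_half) (PI / 4)) => [->|neq]; first lra.
by left; apply: tan_increasing; lra.
Qed.

Lemma atan_2 : atan 2 = PI / 2 - atan_half.
Proof.
have := atan_inv 2 ltac:(lra); rewrite /atan_half.
have -> : 1 / 2 = / 2 by field.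
lra.
Qed.

Lemma Zceil_bounds x : x <= IZR (Defs.Zceil x) < x + 1.
Proof. rewrite /Defs.Zceil opp_IZR; have := base_Int_part (- x); lra. Qed.

Lemma Zfloor_bounds x : IZR (Defs.Zfloor x) <= x < IZR (Defs.Zfloor x) + 1.
Proof. rewrite /Defs.Zfloor; have := base_Int_part x; lra. Qed.

Lemma INR_addn m n : INR (m + n) = INR m + INR n.
Proof. by rewrite -plusE plus_INR. Qed.

Lemma INR_leq m n : (m <= n)%N -> INR m <= INR n.
Proof. by move/leP; apply: le_INR. Qed.

Lemma half_sub_oddE n : (n = (n - odd n) %/ 2 * 2 + odd n)%N.
Proof.
have -> : ((n - odd n) %/ 2 = n./2)%N by rewrite -{1}(odd_double_half n) addKn -muln2 mulnK.
by rewrite muln2 addnC odd_double_half.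
Qed.

Lemma half_floor_bound (z : Z) n : IZR z <= INR n / 2 -> (z <= Z.of_nat ((n - odd n) %/ 2))%Z.
Proof.
move=> z_le; set m := ((n - odd n) %/ 2)%N.
have n_eq := half_sub_oddE n; rewrite -/m in n_eq.
have : INR n <= 2 * INR m + 1.
  rewrite {1}n_eq INR_addn mult_INR /=.
  by case: (odd n) => /=; lra.
move=> n_le; suff : (z < Z.of_nat m + 1)%Z by lia.
by apply: lt_IZR; rewrite plus_IZR -INR_IZR_INZ; lra.
Qed.

(* The direction of a point of the open first quadrant is atan (y / x); using atan
   rather than tan keeps clear of the junk value tan (PI / 2). *)
Definition in_cone (t1 t2 x y : R) : Prop := [/\ 0 < x, 0 < y & t1 < atan (y / x) < t2].

Lemma le_PI_div2 k w : 0 < w -> k * (2 * w) <= PI -> k <= PI / (2 * w).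
Proof.
move=> w_gt0 le_kw; apply: (Rmult_le_reg_r (2 * w)); first lra.
by field_simplify; lra.
Qed.

(* The vertical line x = d, with 1/d <= w, meets the cone in a segment of height
   d (tan (s + w) - tan s) > 1, so it contains a grid point. *)
Lemma grid_point_in_cone s w : 0 <= s -> 0 < w -> s + w <= PI / 4 -> w <= atan_half ->
  let d := Defs.Zceil (/ w) in let y := Defs.Zfloor (tan s * IZR d + 1) in
  [/\ in_cone s (s + w) (IZR d) (IZR y), IZR y <= IZR d & IZR d <= PI / (2 * w)].
Proof.
move=> s_ge0 w_gt0 sw_le w_le d y.
have := PI_gt3; have := atan_half_lt_half; have := atan_half_lt_PI4 => ? ? ?.
have [d_lb d_ub] := Zceil_bounds (/ w); rewrite -/d in d_lb d_ub.
have inv_w : / w * w = 1 by field; lra.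
have inv_w_gt0 : 0 < / w by apply: Rinv_0_lt_compat.
have d_gt0 : 0 < IZR d by lra.
have [y_lb y_ub] := Zfloor_bounds (tan s * IZR d + 1); rewrite -/y in y_lb y_ub.
have tan_s : 0 <= tan s by apply: tan_ge0; lra.
have tan_s_lt1 : tan s < 1 by rewrite -tan_PI4; apply: tan_increasing; lra.
have y_gt0 : 0 < IZR y by nra.
have inv_d : / IZR d <= w by rewrite -(Rinv_inv w); apply: Rinv_le_contravar.
have tan_sw : tan s + w < tan (s + w) by apply: tan_addr_gt; lra.
split.
- split => //; split.
    apply: lt_atan_tan; first lra.
    by apply: (Rmult_lt_reg_r (IZR d)) => //; field_simplify; lra.
  apply: atan_lt_tan; first lra.
  have : IZR y / IZR d <= tan s + / IZR d.
    by apply: (Rmult_le_reg_r (IZR d)) => //; field_simplify; lra.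
  lra.
- apply: IZR_le; have : (y < d + 1)%Z by apply: lt_IZR; rewrite plus_IZR; nra.
  lia.
- by apply: le_PI_div2 => //; nra.
Qed.

Lemma P1_in_cone t1 t2 : 0 <= t1 -> t1 < t2 -> t2 <= PI / 2 ->
  let p := P1 t1 t2 in
  [/\ in_cone t1 t2 (IZR p.1) (IZR p.2), IZR p.1 <= PI / (2 * (t2 - t1))
    & IZR p.2 <= PI / (2 * (t2 - t1))].
Proof.
move=> t1_ge0 lt_t12 t2_le p.
have := PI_gt3; have := atan_half_gt0; have := atan_half_lt_PI4 => ? ? ?.
have := PI4_lt_2atan_half => ?.
have atan_1_1 : atan (1 / 1) = PI / 4 by rewrite Rdiv_1_r atan_1.
have atan_2_1 : atan (2 / 1) = PI / 2 - atan_half by rewrite Rdiv_1_r atan_2.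
rewrite /p /P1 /in_cone -/atan_half.
case: (Rlt_dec (PI / 4) (t2 - t1)) => [w_big|w_le] /=.
  by rewrite atan_1_1; split; [split | apply: le_PI_div2 ..]; lra.
case: (Rlt_dec atan_half (t2 - t1)) => [w_mid|w_small] /=.
  case: (Rle_dec (PI / 4) t1) => [t1_big|t1_lt] /=.
    by rewrite atan_2_1; split; [split | apply: le_PI_div2 ..]; lra.
  case: (Rle_dec atan_half t1) => [t1_mid|t1_small] /=.
    by rewrite atan_1_1; split; [split | apply: le_PI_div2 ..]; lra.
  by rewrite -/atan_half; split; [split | apply: le_PI_div2 ..]; lra.
case: (Rle_dec t2 (PI / 4)) => [t2_small|t2_big] /=.
  have [[d_gt0 y_gt0 cone] y_le d_le] :=
    grid_point_in_cone (s := t1) (w := t2 - t1) ltac:(lra) ltac:(lra) ltac:(lra) ltac:(lra).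
  by split; [split | ..]; lra.
case: (Rlt_dec t1 (PI / 4)) => [t1_small|t1_big] /=.
  by rewrite atan_1_1; split; [split | apply: le_PI_div2 ..]; lra.
have [[d_gt0 x_gt0 cone] x_le d_le] :=
  grid_point_in_cone (s := PI / 2 - t2) (w := t2 - t1)
    ltac:(lra) ltac:(lra) ltac:(lra) ltac:(lra).
set x := IZR (Defs.Zfloor _) in x_gt0 cone x_le *.
set d := IZR (Defs.Zceil _) in d_gt0 cone x_le d_le *.
have -> : d / x = / (x / d) by field; lra.
rewrite atan_inv; last exact: Rdiv_lt_0_compat.
by split; [split | ..]; lra.
Qed.

Definition polar_in (b1 b2 x y : R) : Prop :=
  exists rho th, [/\ 0 < rho, b1 < th < b2, x = rho * cos th & y = rho * sin th].

Lemma in_cone_polar t1 t2 x y : in_cone t1 t2 x y -> polar_in t1 t2 x y.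
Proof.
move=> [x_gt0 y_gt0 th_range]; set th := atan (y / x) in th_range.
have th_bound : - PI / 2 < th < PI / 2 by apply: atan_bound.
have cos_th : 0 < cos th by apply: cos_gt_0; lra.
have tan_th : sin th / cos th = y / x by rewrite -/(tan th) tan_atan.
exists (x / cos th), th; split => //; first exact: Rdiv_lt_0_compat.
  by field; lra.
have -> : sin th = y / x * cos th by rewrite -tan_th; field; lra.
by field; lra.
Qed.

Lemma polar_in_dot b1 b2 x y p q : polar_in b1 b2 x y ->
  (forall th, b1 < th < b2 -> 0 < p * cos th + q * sin th) -> 0 < p * x + q * y.
Proof.
move=> [rho [th [rho_gt0 th_range -> ->]]] dir_gt0.
by have := dir_gt0 th th_range; nra.
Qed.

Definition coord_bound (w : R) : R := Rmax 1 (PI / (2 * w)).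

Lemma coord_bound_ge1 w : 1 <= coord_bound w.
Proof. exact: Rmax_l. Qed.

Lemma P2_spec b1 b2 : 0 <= b1 -> b1 < b2 -> b2 <= PI ->
  let p := P2 b1 b2 in
  [/\ polar_in b1 b2 (IZR p.1) (IZR p.2), Rabs (IZR p.1) <= coord_bound (b2 - b1)
    & IZR p.2 <= coord_bound (b2 - b1)].
Proof.
move=> b1_ge0 lt_b12 b2_le p.
have := PI_RGT_0 => PI_gt0.
have bound_ge : PI / (2 * (b2 - b1)) <= coord_bound (b2 - b1) by apply: Rmax_r.
have := coord_bound_ge1 (b2 - b1) => bound_ge1.
rewrite /p /P2.
case: (Rlt_dec b1 (PI / 2)) => b1_lt; case: (Rlt_dec (PI / 2) b2) => b2_gt /=.
- split; [ | rewrite Rabs_R0 | ]; try lra.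
  by exists 1, (PI / 2); rewrite cos_PI2 sin_PI2; split; lra.
- case: (Rle_dec b2 (PI / 2)) => [b2_le'|b2_gt'] /=; last lra.
  have [cone x_le y_le] := P1_in_cone b1_ge0 lt_b12 b2_le'.
  have [x_gt0 _ _] := cone.
  split; [exact: in_cone_polar | rewrite Rabs_pos_eq | ]; lra.
- case: (Rle_dec b2 (PI / 2)) => [b2_le'|_] /=; first lra.
  have [cone x_le y_le] :=
    P1_in_cone (t1 := PI - b2) (t2 := PI - b1) ltac:(lra) ltac:(lra) ltac:(lra).
  have [x_gt0 _ _] := cone.
  have width_eq : PI - b1 - (PI - b2) = b2 - b1 by ring.
  rewrite width_eq in x_le y_le.
  rewrite opp_IZR Rabs_Ropp Rabs_pos_eq; last lra.
  split; [ | lra | lra].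
  have [rho [th [rho_gt0 th_range -> ->]]] := in_cone_polar cone.
  exists rho, (PI - th); split => //; first lra.
    by rewrite Rtrigo_facts.cos_pi_minus; ring.
  by rewrite sin_PI_x.
- lra.
Qed.

Definition dotp (p q : R) (z : R * R) : R := p * z.1 + q * z.2.

Lemma on_segment_sym z A B : on_segment z A B -> on_segment z B A.
Proof.
move=> [t [t01 [z1 z2]]]; exists (1 - t); split; first lra.
by rewrite z1 z2; split; ring.
Qed.

Lemma on_segment_dotp_ge p q W z A B :
  on_segment z A B -> W <= dotp p q A -> W <= dotp p q B -> W <= dotp p q z.
Proof. by move=> [t [t01 [z1 z2]]]; rewrite /dotp z1 z2; nra. Qed.

Lemma on_segment_dotp_max p q W z A B : on_segment z A B ->
  dotp p q A <= W -> dotp p q B < W -> W <= dotp p q z -> z = A /\ dotp p q A = W.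
Proof.
move=> [t [t01 [z1 z2]]] A_le B_lt; rewrite /dotp z1 z2 /= => W_le.
rewrite /dotp in A_le B_lt.
have t0 : t = 0 by nra.
split; last by rewrite /dotp; subst t; lra.
move: z1 z2; rewrite t0; case: z {W_le} => ? ? /= -> ->.
by case: A {A_le} => ? ? /=; congr pair; ring.
Qed.

Local Close Scope R_scope.

Section RootedTree.

Variables (V : finType) (r : V) (par : V -> V).
Hypotheses (par_root : par r = r) (reach_root : forall v, fconnect par v r).

Lemma iter_root k : iter k par r = r.
Proof. by elim: k => //= k ->. Qed.

Lemma fconnect_iterP x y : reflect (exists k, iter k par x = y) (fconnect par x y).
Proof.
apply: (iffP idP) => [xy|[k <-]]; last exact: fconnect_iter.
by exists (findex par x y); apply: iter_findex.
Qed.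

Lemma fconnect_par x : fconnect par x (par x).
Proof. by apply/fconnect_iterP; exists 1. Qed.

Lemma iter_cycle_root k x : 0 < k -> iter k par x = x -> x = r.
Proof.
move=> k_gt0 cyc; have /fconnect_iterP[m xm] := reach_root x.
have iter_mul j : iter (j * k) par x = x by elim: j => // j IH; rewrite mulSn iterD IH cyc.
have le_m : m <= m * k by rewrite leq_pmulr.
by move: (iter_mul m); rewrite -(subnK le_m) iterD xm iter_root.
Qed.

Lemma fconnect_antisym x y : fconnect par x y -> fconnect par y x -> x = y.
Proof.
move=> /fconnect_iterP[a xy] /fconnect_iterP[b yx].
have [/eqP|ba_gt0] := posnP (b + a).
  by rewrite addn_eq0 => /andP[_ /eqP a0]; rewrite -xy a0.
have x_root : x = r by apply: (iter_cycle_root ba_gt0); rewrite iterD xy yx.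
by rewrite -xy x_root iter_root.
Qed.

Lemma fconnect_par_neq x y : fconnect par x y -> x != y -> fconnect par (par x) y.
Proof.
move=> /fconnect_iterP[[|k] xy] neq_xy; first by rewrite -xy eqxx in neq_xy.
by apply/fconnect_iterP; exists k; rewrite -iterSr.
Qed.

Lemma par_not_desc v : v != r -> ~~ fconnect par (par v) v.
Proof.
move=> v_nr; apply/negP => pv_v.
have v_fix : iter 1 par v = v by apply: fconnect_antisym pv_v (fconnect_par v).
by rewrite (iter_cycle_root (isT : 0 < 1) v_fix) eqxx in v_nr.
Qed.

Lemma fconnect_neq_root x c : c != r -> fconnect par x c -> x != r.
Proof.
move=> c_nr xc; apply: contraNneq c_nr => x_root.
by apply/eqP/fconnect_antisym; [apply: reach_root | rewrite -x_root].
Qed.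

Lemma ancestor_ind (c : V) (P : V -> Prop) :
  P c -> (forall x, x != c -> fconnect par (par x) c -> P (par x) -> P x) ->
  forall x, fconnect par x c -> P x.
Proof.
move=> Pc IH x /fconnect_iterP[k]; elim: k x => [|k IHk] x /= xc; first by rewrite xc.
have [->//|neq_xc] := eqVneq x c.
have pxc : fconnect par (par x) c by apply/fconnect_iterP; exists k; rewrite -iterSr.
by apply: IH => //; apply: IHk; rewrite -iterSr.
Qed.

Lemma parent_ind (P : V -> Prop) :
  P r -> (forall x, x != r -> P (par x) -> P x) -> forall x, P x.
Proof. by move=> Pr IH x; apply: (ancestor_ind Pr) => // y y_nr _; apply: IH. Qed.

Lemma ex_minimal_iter x z : fconnect par x z ->
  exists k, iter k par x = z /\ forall i, i < k -> iter i par x != z.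
Proof.
move=> /fconnect_iterP[K xz].
have ex : exists n, iter n par x == z by exists K; rewrite xz.
case: (ex_minnP ex) => k /eqP xz_k k_min; exists k; split => //.
by move=> i lt_ik; apply: contraTneq lt_ik => xz_i; rewrite -leqNgt k_min ?xz_i.
Qed.

Lemma iter_neq_root x z k : iter k par x = z -> (forall i, i < k -> iter i par x != z) ->
  forall i, i < k -> iter i par x != r.
Proof.
move=> xz_k k_min i lt_ik; apply: contraNneq (k_min i lt_ik) => xr_i.
by rewrite -xz_k -(subnK (ltnW lt_ik)) iterD xr_i iter_root.
Qed.

Lemma fconnect_children_eq w c1 c2 : c1 != r -> c2 != r -> par c1 = par c2 ->
  fconnect par w c1 -> fconnect par w c2 -> c1 = c2.
Proof.
move=> c1_nr c2_nr same_par /fconnect_iterP[i wc1] /fconnect_iterP[j wc2].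
wlog le_ij : i j c1 c2 c1_nr c2_nr same_par wc1 wc2 / i <= j.
  move=> gen; have [le_ij|/ltnW le_ji] := leqP i j; first exact: (gen i j).
  by apply/esym; apply: (gen j i).
have [/eqP|ji_gt0] := posnP (j - i).
  by rewrite subn_eq0 => le_ji; rewrite -wc1 -wc2 (@anti_leq i j) ?le_ij.
have c12 : iter (j - i) par c1 = c2 by rewrite -wc1 -iterD subnK.
have pc1_root : par c1 = r.
  by apply: (iter_cycle_root ji_gt0); rewrite -iterSr iterS c12 same_par.
move: c12; rewrite -(prednK ji_gt0) iterSr pc1_root iter_root => c2_root.
by rewrite c2_root eqxx in c2_nr.
Qed.

Variant lineage (x y : V) : Prop :=
  | LineageDesc of fconnect par y x
  | LineageAnc of fconnect par x y
  | LineageFork w c1 c2 of c1 != c2 & c1 != r & c2 != r & par c1 = w & par c2 = w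
      & fconnect par x c1 & fconnect par y c2.

Lemma lineageP x y : lineage x y.
Proof.
have ex : exists k, fconnect par y (iter k par x).
  by have /fconnect_iterP[K xr] := reach_root x; exists K; rewrite xr.
case: (ex_minnP ex) => [[|k] yx_k k_min]; first exact: LineageDesc.
set w := iter k.+1 par x in yx_k.
have [j [yw_j j_min]] := ex_minimal_iter yx_k.
case: j yw_j j_min => [|j] yw_j j_min.
  by apply: LineageAnc; rewrite /= in yw_j; rewrite yw_j; apply: fconnect_iter.
have not_y_xk : ~~ fconnect par y (iter k par x).
  by apply/negP => /k_min; rewrite ltnn.
apply: (@LineageFork _ _ w (iter k par x) (iter j par y)); try exact: fconnect_iter.
- by apply: contraNneq not_y_xk => ->; apply: fconnect_iter.
- by apply: contraNneq not_y_xk => ->; apply: reach_root.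
- apply: contraNneq (j_min j (ltnSn j)) => yr_j.
  by rewrite -yw_j /= yr_j par_root.
- by [].
- exact: yw_j.
Qed.

Lemma subtree_size_gt0 v : 0 < subtree_size par v.
Proof. by apply/card_gt0P; exists v; rewrite inE connect0. Qed.

Lemma subtree_size_root : subtree_size par r = #|V|.
Proof. by apply: eq_card => w; rewrite !inE reach_root. Qed.

Lemma subtree_size_par v : v != r -> subtree_size par v < subtree_size par (par v).
Proof.
move=> v_nr; rewrite /subtree_size (cardD1 (par v) [pred w | fconnect par w (par v)]).
rewrite inE connect0 add1n ltnS.
apply/subset_leq_card/subsetP => w; rewrite !inE => wv.
rewrite (connect_trans wv (fconnect_par v)) andbT.
by apply: contraNneq (par_not_desc v_nr) => <-.
Qed.

(* The subtrees of distinct children of u are disjoint and lie in T_u minus u. *)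
Lemma sum_subtree_sizes u s : uniq s -> (forall c, c \in s -> c != r /\ par c = u) ->
  \sum_(c <- s) subtree_size par c <= subtree_size par u - 1.
Proof.
move=> s_uniq s_children.
pose below (t : seq V) := [pred w | has (fun c => fconnect par w c) t].
have card_below t : uniq t -> {subset t <= s} -> #|below t| = \sum_(c <- t) subtree_size par c.
  elim: t => [|c t IH] /=.
    by move=> _ _; rewrite big_nil; apply: eq_card0 => w; rewrite !inE.
  move=> /andP[c_t t_uniq] sub_ct; rewrite big_cons -IH //; last first.
    by move=> d dt; apply: sub_ct; rewrite inE dt orbT.
  have -> : #|below (c :: t)| = #|[predU [pred w | fconnect par w c] & below t]|.
    by apply: eq_card => w; rewrite !inE.
  rewrite -cardUI -[LHS]addn0; congr (_ + _); apply/esym/eq_card0 => w.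
  rewrite !inE; apply/negP => /andP[wc /hasP[d dt wd]].
  have [c_nr pc] := s_children c (sub_ct c (mem_head _ _)).
  have [d_nr pd] := s_children d (sub_ct d (mem_behead (dt : d \in behead (c :: t)))).
  have cd : c = d by apply: (fconnect_children_eq c_nr d_nr _ wc wd); rewrite pc pd.
  by rewrite cd dt in c_t.
rewrite -card_below // /subtree_size (cardD1 u [pred w | fconnect par w u]).
rewrite inE connect0 add1n subn1 /=.
apply/subset_leq_card/subsetP => w; rewrite !inE => /hasP[c cs wc].
have [c_nr <-] := s_children c cs.
rewrite (connect_trans wc (fconnect_par c)) andbT.
by apply: contraNneq (par_not_desc c_nr) => <-.
Qed.

Lemma fconnect_iter_le x i k : i <= k -> fconnect par (iter i par x) (iter k par x).
Proof. by move=> le_ik; apply/fconnect_iterP; exists (k - i); rewrite -iterD subnK. Qed.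

Lemma fconnect_below_child x y c : fconnect par x c -> fconnect par x y ->
  fconnect par y (par c) -> y != par c -> fconnect par y c.
Proof.
move=> /fconnect_iterP[m xc] /fconnect_iterP[i xy] y_pc neq_y.
have [le_im|lt_mi] := leqP i m; first by rewrite -xc -xy fconnect_iter_le.
have pc_y : fconnect par (par c) y by rewrite -xc -xy -iterS fconnect_iter_le.
by rewrite (fconnect_antisym y_pc pc_y) eqxx in neq_y.
Qed.

Lemma path_iter_up (e : rel V) k x : (forall i, i < k -> e (iter i par x) (par (iter i par x))) ->
  exists s, path e x s /\ last x s = iter k par x.
Proof.
elim: k x => [|k IH] x steps; first by exists [::].
have [s [path_s last_s]] : exists s, path e (par x) s /\ last (par x) s = iter k par (par x).
  by apply: IH => i lt_ik; rewrite -iterSr; apply: steps.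
exists (par x :: s); rewrite /= path_s last_s -iterSr andbT; split => //.
exact: (steps 0).
Qed.

Lemma path_iter_down (e : rel V) k x : (forall i, i < k -> e (par (iter i par x)) (iter i par x)) ->
  exists s, path e (iter k par x) s /\ last (iter k par x) s = x.
Proof.
elim: k x => [|k IH] x steps; first by exists [::].
have [s [path_s last_s]] :
    exists s, path e (iter k par (par x)) s /\ last (iter k par (par x)) s = par x.
  by apply: IH => i lt_ik; rewrite -iterSr; apply: steps.
exists (rcons s x); rewrite iterSr rcons_path last_rcons path_s last_s; split => //.
exact: (steps 0).
Qed.

Lemma desc_neq_root x y : fconnect par x y -> x != y -> x != r.
Proof.
by move=> xy; apply: contra_neq => x_r; apply: (fconnect_antisym xy); rewrite x_r reach_root.
Qed.

Section TreeEdges.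

Variable adj : rel V.
Hypotheses (tree : is_tree adj) (adj_par : forall v, v != r -> adj v (par v)).

Lemma adj_sym x y : adj x y = adj y x.
Proof. by have [sym _] := tree; apply: sym. Qed.

Lemma adj_irr x : adj x x = false.
Proof. by have [_ [irr _]] := tree; apply: irr. Qed.

Lemma par_adj v : v != r -> adj (par v) v.
Proof. by move=> v_nr; rewrite adj_sym adj_par. Qed.

Lemma traject_par_uniq x n : (forall i, i.+1 < n -> iter i par x != r) -> uniq (traject par x n).
Proof.
elim: n x => [|n IH] x nr //=; apply/andP; split; last by apply: IH => i lt_i; rewrite -iterSr nr.
apply/negP => /trajectP[i lt_in x_i].
have x_root : x = r by apply: (iter_cycle_root (isT : 0 < i.+1)); rewrite iterSr -x_i.
have lt1n : 1 < n.+1 by rewrite ltnS (leq_ltn_trans (leq0n i)).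
by move: (nr 0 lt1n); rewrite /= x_root eqxx.
Qed.

Lemma path_adj_traject k x : (forall i, i < k -> iter i par x != r) ->
  path adj x (traject par (par x) k).
Proof.
elim: k x => [|k IH] x nr //=; rewrite adj_par ?(nr 0) //.
by apply: IH => i lt_i; rewrite -iterSr nr.
Qed.

Lemma path_adj_rev_traject w j y : iter j par y = w ->
  (forall l, l < j -> iter l par y != r) -> path adj w (rev (traject par y j)).
Proof.
elim: j y => [|j IH] y yw_j nr //=.
rewrite rev_cons rcons_path IH -?iterSr //=; last by move=> l lt_l; rewrite -iterSr nr.
have -> : last w (rev (traject par (par y) j)) = par y.
  by case: j {IH nr} yw_j => [|j] /= yw_j; rewrite ?yw_j // rev_cons last_rcons.
exact/par_adj/(nr 0).
Qed.

(* Two upward paths from x and y that first meet at w, closed by an edge y x,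
   would form a cycle of T. *)
Lemma upward_paths_no_edge x y w k j : adj y x -> iter k par x = w -> iter j par y = w ->
  (forall i, i < k -> iter i par x != w) -> (forall l, l < j -> iter l par y != w) ->
  (forall i l, i < k -> l < j -> iter i par x != iter l par y) -> 1 < k + j -> False.
Proof.
move=> yx xw_k yw_j k_min j_min disjoint len_ge2.
have x_nr := iter_neq_root xw_k k_min; have y_nr := iter_neq_root yw_j j_min.
have [_ [_ [_ acyclic]]] := tree; apply: acyclic.
exists (traject par x k.+1 ++ rev (traject par y j)); split.
- have x_uniq : uniq (traject par x k.+1).
    by apply: traject_par_uniq => i; rewrite ltnS; apply: x_nr.
  have y_uniq : uniq (traject par y j).
    by apply: traject_par_uniq => i /ltnW; apply: y_nr.
  rewrite cat_uniq rev_uniq has_rev x_uniq y_uniq andbT andTb.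
  apply/hasPn => z /trajectP[l lt_lj ->]; apply/negP => /trajectP[i le_ik same].
  move: le_ik; rewrite ltnS leq_eqVlt => /orP[/eqP eq_ik | lt_ik].
    by move: (j_min l lt_lj); rewrite same eq_ik xw_k eqxx.
  by move: (disjoint i l lt_ik lt_lj); rewrite same eqxx.
- by rewrite size_cat size_rev !size_traject addSn ltnS.
- have last_y : last y (traject par x k.+1 ++ rev (traject par y j)) = y.
    rewrite last_cat /= last_traject xw_k.
    case: j {j_min disjoint len_ge2 y_nr} yw_j => [|j] /= yw_j; first by rewrite yw_j.
    by rewrite rev_cons last_rcons.
  rewrite (cycle_path y) last_y cat_path /= yx path_adj_traject // last_traject xw_k /=.
  exact: path_adj_rev_traject yw_j y_nr.
Qed.

Lemma desc_adj_par x z : fconnect par x z -> adj z x -> x != z -> z = par x.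
Proof.
move=> xz zx neq_xz; apply/eqP/negPn/negP => neq_zp.
have [k [xz_k k_min]] := ex_minimal_iter xz.
apply: (@upward_paths_no_edge x z z k 0) => //.
case: k xz_k {k_min} => [|[|k]] //= xz_k; first by rewrite xz_k eqxx in neq_xz.
by rewrite xz_k eqxx in neq_zp.
Qed.

Lemma adj_parent a b : adj a b -> (b != r /\ a = par b) \/ (a != r /\ b = par a).
Proof.
move=> ab.
have par_edge_nr w : adj (par w) w -> w != r.
  by move=> pw; apply: contraTneq pw => ->; rewrite par_root adj_irr.
have [a_pb|neq_a] := eqVneq a (par b).
  by left; split => //; apply: par_edge_nr; rewrite -a_pb.
have [b_pa|neq_b] := eqVneq b (par a).
  by right; split => //; apply: par_edge_nr; rewrite -b_pa adj_sym.
exfalso; have neq_ab : a != b by apply: contraTneq ab => ->; rewrite adj_irr.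
case: (lineageP a b) => [ba|ab_desc|w c1 c2 neq_c12 c1_nr c2_nr pc1 pc2 ac1 bc2].
- by move: neq_a; rewrite (desc_adj_par ba ab) ?eqxx // eq_sym.
- by move: neq_b; rewrite (desc_adj_par ab_desc _ neq_ab) ?eqxx // adj_sym.
have aw : fconnect par a w by rewrite -pc1 (connect_trans ac1 (fconnect_par c1)).
have bw : fconnect par b w by rewrite -pc2 (connect_trans bc2 (fconnect_par c2)).
have [k [aw_k k_min]] := ex_minimal_iter aw.
have [j [bw_j j_min]] := ex_minimal_iter bw.
apply: (@upward_paths_no_edge a b w k j) => //; first by rewrite adj_sym.
  move=> i l lt_ik lt_lj; apply/eqP => same.
  have ac1_i : fconnect par (iter i par a) c1.
    apply: fconnect_below_child ac1 (fconnect_iter _ _ _) _ _; rewrite pc1 ?k_min //.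
    by rewrite -aw_k fconnect_iter_le // ltnW.
  have bc2_l : fconnect par (iter l par b) c2.
    apply: fconnect_below_child bc2 (fconnect_iter _ _ _) _ _; rewrite pc2 ?j_min //.
    by rewrite -bw_j fconnect_iter_le // ltnW.
  rewrite same in ac1_i.
  by rewrite (fconnect_children_eq c1_nr c2_nr _ ac1_i bc2_l) ?eqxx ?pc1 ?pc2 in neq_c12.
have k_gt0 : 0 < k.
  by case: k aw_k {k_min} => // /= aw_0; move: ac1; rewrite aw_0 -pc1 (negbTE (par_not_desc c1_nr)).
have j_gt0 : 0 < j.
  by case: j bw_j {j_min} => // /= bw_0; move: bc2; rewrite bw_0 -pc2 (negbTE (par_not_desc c2_nr)).
by rewrite -(addn1 1) leq_add.
Qed.

End TreeEdges.

Section Angles.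

Variables (ch : V -> seq V) (a1 a2 : V -> R).
Hypotheses (ch_order : child_order r par ch) (angles : strategy1 r par ch a1 a2).

Local Open Scope R_scope.

Definition desc_count u := INR (subtree_size par u - 1).
Definition prefix_count u i := INR (\sum_(c <- take i (ch u)) subtree_size par c).

Lemma INR_subtree_size_ge1 v : 1 <= INR (subtree_size par v).
Proof. exact: INR_leq (subtree_size_gt0 v). Qed.

Lemma mem_ch u v : (v \in ch u) = (v != r) && (par v == u).
Proof. by have [_ ->] := ch_order u. Qed.

Lemma index_ch v : v != r ->
  (index v (ch (par v)) < size (ch (par v)))%N /\
  nth (par v) (ch (par v)) (index v (ch (par v))) = v.
Proof.
move=> v_nr; have v_ch : v \in ch (par v) by rewrite mem_ch v_nr eqxx.
by rewrite index_mem v_ch nth_index.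
Qed.

Lemma prefix_countS u i : (i < size (ch u))%N ->
  prefix_count u i.+1 = prefix_count u i + INR (subtree_size par (nth u (ch u) i)).
Proof.
by move=> lt_i; rewrite /prefix_count (take_nth u lt_i) -cats1 big_cat big_seq1 INR_addn.
Qed.

Lemma prefix_count_mono u i j : (i <= j)%N -> prefix_count u i <= prefix_count u j.
Proof.
move=> /subnK <-; elim: (j - i)%N => [|k IH]; first by rewrite add0n; lra.
rewrite addSn; suff : prefix_count u (k + i) <= prefix_count u (k + i).+1 by lra.
have [lt_ki|le_ki] := ltnP (k + i) (size (ch u)).
  by rewrite (prefix_countS lt_ki); have := pos_INR (subtree_size par (nth u (ch u) (k + i))); lra.
by rewrite /prefix_count (take_oversize le_ki) (take_oversize (leqW le_ki)); lra.
Qed.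

Lemma prefix_count_le u i : prefix_count u i <= desc_count u.
Proof.
apply: INR_leq; apply: sum_subtree_sizes.
  by rewrite take_uniq //; have [] := ch_order u.
by move=> c /mem_take; rewrite mem_ch => /andP[-> /eqP ->].
Qed.

Lemma desc_count_gt0 v : v != r -> 0 < desc_count (par v).
Proof.
move=> v_nr; have [lt_i nth_i] := index_ch v_nr.
have := prefix_count_le (par v) (index v (ch (par v))).+1.
rewrite (prefix_countS lt_i) nth_i.
have := pos_INR (\sum_(c <- take (index v (ch (par v))) (ch (par v))) subtree_size par c).
have := INR_subtree_size_ge1 v; rewrite /prefix_count; lra.
Qed.

Lemma angles_nth u i : (i < size (ch u))%N ->
  a1 (nth u (ch u) i) = a1 u + (a2 u - a1 u) * (prefix_count u i / desc_count u) /\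
  a2 (nth u (ch u) i) = a1 u + (a2 u - a1 u) * (prefix_count u i.+1 / desc_count u).
Proof.
have [_ [_ step]] := angles.
elim: i => [|i IH] lt_i.
  have [a1_0 a2_0] := step u 0%N lt_i; rewrite /= in a1_0 a2_0.
  rewrite (prefix_countS lt_i) /prefix_count take0 big_nil /= Rplus_0_l.
  by split; rewrite ?a2_0 a1_0 /Rdiv /desc_count; lra.
have [IH1 IH2] := IH (ltnW lt_i).
have [a1_S a2_S] := step u i.+1 lt_i; rewrite /= in a1_S a2_S.
split; first by rewrite a1_S IH2.
by rewrite a2_S a1_S IH2 (prefix_countS lt_i) /Rdiv /desc_count; lra.
Qed.

Lemma width_child v : v != r ->
  a2 v - a1 v = (a2 (par v) - a1 (par v)) * (INR (subtree_size par v) / desc_count (par v)).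
Proof.
move=> v_nr; have [lt_i nth_i] := index_ch v_nr.
have [_ [_ step]] := angles; have [_ a2_v] := step _ _ lt_i; rewrite /= nth_i in a2_v.
by rewrite a2_v /desc_count; lra.
Qed.

Lemma child_angles v : v != r -> a1 (par v) < a2 (par v) ->
  [/\ a1 (par v) <= a1 v, a1 v < a2 v & a2 v <= a2 (par v)].
Proof.
move=> v_nr lt_par; have [lt_i nth_i] := index_ch v_nr.
have [a1_v a2_v] := angles_nth lt_i; rewrite nth_i in a1_v a2_v.
set i := index v (ch (par v)) in lt_i nth_i a1_v a2_v.
have count_i := prefix_countS lt_i; rewrite nth_i in count_i.
have D_gt0 := desc_count_gt0 v_nr.
have count_le := prefix_count_le (par v) i.+1.
have size_ge1 := INR_subtree_size_ge1 v.
have count_ge0 : 0 <= prefix_count (par v) i by apply: pos_INR.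
set D := desc_count (par v) in D_gt0 a1_v a2_v count_le.
have invD : 0 < / D by apply: Rinv_0_lt_compat.
set t1 := prefix_count (par v) i / D in a1_v.
set t2 := prefix_count (par v) i.+1 / D in a2_v.
have t1_ge0 : 0 <= t1 by apply: Rmult_le_pos; lra.
have lt_t12 : t1 < t2 by apply: Rmult_lt_compat_r; lra.
have t2_le1 : t2 <= 1.
  by rewrite /t2 -(Rdiv_diag D); [apply: Rmult_le_compat_r | ]; lra.
have d_gt0 : 0 < a2 (par v) - a1 (par v) by lra.
rewrite a1_v a2_v; split; nra.
Qed.

Lemma angles_range x : [/\ 0 <= a1 x, a1 x < a2 x & a2 x <= PI].
Proof.
have [a1_r [a2_r _]] := angles.
elim/parent_ind: x => [|x x_nr [IH1 IH2 IH3]].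
  by rewrite a1_r a2_r; have := PI_RGT_0; split; lra.
by have [] := child_angles x_nr IH2; split; lra.
Qed.

Lemma desc_angles_sub c x : fconnect par x c -> a1 c <= a1 x /\ a2 x <= a2 c.
Proof.
move: x; apply: (ancestor_ind (c := c)) => [|x neq_xc px_c [IH1 IH2]]; first lra.
have x_nr := desc_neq_root (connect_trans (fconnect_par x) px_c) neq_xc.
have [_ lt_par _] := angles_range (par x).
by have [] := child_angles x_nr lt_par; lra.
Qed.

Lemma sibling_angles_disjoint c1 c2 : c1 != c2 -> c1 != r -> c2 != r -> par c1 = par c2 ->
  a2 c1 <= a1 c2 \/ a2 c2 <= a1 c1.
Proof.
move=> neq_c12 c1_nr c2_nr same_par.
have [lt_i1 nth_i1] := index_ch c1_nr; have [lt_i2 nth_i2] := index_ch c2_nr.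
rewrite same_par in lt_i1 nth_i1.
set u := par c2 in lt_i1 lt_i2 nth_i1 nth_i2.
have [_ lt_u _] := angles_range u.
have invD : 0 < / desc_count u by apply/Rinv_0_lt_compat/desc_count_gt0.
have ordered i j : (i < j)%N -> (j < size (ch u))%N -> a2 (nth u (ch u) i) <= a1 (nth u (ch u) j).
  move=> lt_ij lt_j; have [_ ->] := angles_nth (ltn_trans lt_ij lt_j).
  have [-> _] := angles_nth lt_j; have := prefix_count_mono u lt_ij.
  move=> le_count; apply/Rplus_le_compat_l/Rmult_le_compat_l; first lra.
  by apply: Rmult_le_compat_r; lra.
case: (ltngtP (index c1 (ch u)) (index c2 (ch u))) => [lt12|lt21|eq12].
- by left; rewrite -{1}nth_i1 -nth_i2; apply: ordered.
- by right; rewrite -{1}nth_i2 -nth_i1; apply: ordered.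
- by rewrite -nth_i1 -nth_i2 eq12 eqxx in neq_c12.
Qed.

Lemma angles_sin_gt0 c th : a1 c < th < a2 c -> 0 < 0 * cos th + 1 * sin th.
Proof.
move=> th_range; have [? ? ?] := angles_range c.
have : 0 < sin th by apply: sin_gt_0; lra.
lra.
Qed.

(* (p, q) is normal to the boundary ray, at angle a2 c1 or a2 c2, between the
   disjoint angle intervals of the two siblings. *)
Lemma sibling_separating_dir c1 c2 : c1 != c2 -> c1 != r -> c2 != r -> par c1 = par c2 ->
  exists p q, (forall th, a1 c1 < th < a2 c1 -> 0 < - p * cos th + - q * sin th) /\
              (forall th, a1 c2 < th < a2 c2 -> 0 < p * cos th + q * sin th).
Proof.
move=> neq_c12 c1_nr c2_nr same_par.
have [? ? ?] := angles_range c1; have [? ? ?] := angles_range c2.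
have sin_diff_gt0 s t : s < t < s + PI -> 0 < sin t * cos s - cos t * sin s.
  by move=> st; rewrite -sin_minus; apply: sin_gt_0; lra.
case: (sibling_angles_disjoint neq_c12 c1_nr c2_nr same_par) => [le12|le21].
- exists (- sin (a2 c1)), (cos (a2 c1)); split => th th_range.
    by have := sin_diff_gt0 th (a2 c1) ltac:(lra); lra.
  by have := sin_diff_gt0 (a2 c1) th ltac:(lra); lra.
- exists (sin (a2 c2)), (- cos (a2 c2)); split => th th_range.
    by have := sin_diff_gt0 (a2 c2) th ltac:(lra); lra.
  by have := sin_diff_gt0 th (a2 c2) ltac:(lra); lra.
Qed.

Section Drawing.

Variables (adj : rel V) (pos : V -> Z * Z).
Hypotheses (tree : is_tree adj) (adj_par : forall v, v != r -> adj v (par v)).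
Hypotheses (gravity : gravity_root adj r) (placed : placement r par a1 a2 pos).

Definition xcoord v := IZR (pos v).1.
Definition ycoord v := IZR (pos v).2.
Definition proj p q v := p * xcoord v + q * ycoord v.

Lemma proj_opp p q v : proj (- p) (- q) v = - proj p q v.
Proof. by rewrite /proj; ring. Qed.

Lemma pos_root : xcoord r = 0 /\ ycoord r = 0.
Proof. by have [pos_r _] := placed; rewrite /xcoord /ycoord pos_r. Qed.

Lemma edge_spec v : v != r ->
  [/\ polar_in (a1 v) (a2 v) (xcoord v - xcoord (par v)) (ycoord v - ycoord (par v)),
      Rabs (xcoord v - xcoord (par v)) <= coord_bound (a2 v - a1 v)
    & ycoord v - ycoord (par v) <= coord_bound (a2 v - a1 v)].
Proof.
move=> v_nr; have [_ step] := placed.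
have [? ? ?] := angles_range v.
have -> : xcoord v - xcoord (par v) = IZR (P2 (a1 v) (a2 v)).1.
  by rewrite /xcoord step // plus_IZR; ring.
have -> : ycoord v - ycoord (par v) = IZR (P2 (a1 v) (a2 v)).2.
  by rewrite /ycoord step // plus_IZR; ring.
exact: P2_spec.
Qed.

Lemma proj_par_lt p q v : v != r ->
  (forall th, a1 v < th < a2 v -> 0 < p * cos th + q * sin th) -> proj p q (par v) < proj p q v.
Proof.
move=> v_nr dir_gt0; have [polar _ _] := edge_spec v_nr.
by have := polar_in_dot polar dir_gt0; rewrite /proj; lra.
Qed.

Lemma proj_desc_gt p q c : c != r ->
  (forall th, a1 c < th < a2 c -> 0 < p * cos th + q * sin th) ->
  forall x, fconnect par x c -> proj p q (par c) < proj p q x.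
Proof.
move=> c_nr dir_gt0; apply: ancestor_ind => [|x neq_xc px_c IH]; first exact: proj_par_lt.
have xc := connect_trans (fconnect_par x) px_c.
have [? ?] := desc_angles_sub xc.
suff : proj p q (par x) < proj p q x by lra.
by apply: proj_par_lt (fconnect_neq_root c_nr xc) _ => th ?; apply: dir_gt0; lra.
Qed.

Definition width v := a2 v - a1 v.
Definition potential v := INR (subtree_size par v) * coord_bound (width v).

Lemma width_gt0 v : 0 < width v.
Proof. by have [? ? ?] := angles_range v; rewrite /width; lra. Qed.

Lemma subtree_in_component c : c != r -> par c = r ->
  (subtree_size par c <= #|[pred w | connect (del_rel adj r) c w]|)%N.
Proof.
move=> c_nr pc; apply/subset_leq_card/subsetP => x; rewrite !inE => xc.
have del_sym : symmetric (del_rel adj r).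
  by move=> y z; rewrite /del_rel /= adj_sym; case: (y != r); case: (z != r); rewrite ?andbT ?andbF.
rewrite (sym_connect_sym del_sym); move: x xc; apply: ancestor_ind => [|x _ px_c IH].
  exact: connect0.
have x_nr := fconnect_neq_root c_nr (connect_trans (fconnect_par x) px_c).
apply: connect_trans (connect1 _) IH; rewrite /del_rel /= adj_par // x_nr.
exact: fconnect_neq_root c_nr px_c.
Qed.

Lemma root_child_size c : c != r -> par c = r -> INR (subtree_size par c) * 2 <= INR #|V|.
Proof.
move=> c_nr pc; rewrite -[2]/(INR 2) -mult_INR; apply: INR_leq.
exact: leq_trans (leq_mul (subtree_in_component c_nr pc) (leqnn 2)) (gravity c_nr).
Qed.

Lemma potential_root_child c : c != r -> par c = r -> potential c <= INR #|V| / 2.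
Proof.
move=> c_nr pc; have := width_child c_nr; have := desc_count_gt0 c_nr.
have desc_r : desc_count r = INR #|V| - 1.
  by rewrite /desc_count subtree_size_root minus_INR //; apply/leP/card_gt0P; exists r.
have [a1_r [a2_r _]] := angles; rewrite pc desc_r a1_r a2_r Rminus_0_r.
have := root_child_size c_nr pc; have := INR_subtree_size_ge1 c.
rewrite /potential /coord_bound /width.
set s := INR (subtree_size par c); set n := INR #|V| => s_ge1 s_le n_gt1 ->.
have := PI_RGT_0 => PI_gt0.
have -> : PI / (2 * (PI * (s / (n - 1)))) = (n - 1) / (2 * s) by field; lra.
apply: (Rmax_case_strong 1 ((n - 1) / (2 * s)) (fun z => s * z <= n / 2)) => _; first lra.
have -> : s * ((n - 1) / (2 * s)) = (n - 1) / 2 by field; lra.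
lra.
Qed.

Lemma potential_par v : v != r -> par v != r ->
  potential v <= potential (par v) - coord_bound (width (par v)).
Proof.
move=> v_nr pv_nr; have := width_child v_nr; rewrite -/(width v) -/(width (par v)).
have D_gt0 := desc_count_gt0 v_nr.
have s_le : INR (subtree_size par v) <= desc_count (par v).
  rewrite /desc_count; apply: INR_leq; rewrite leq_subRL ?subtree_size_gt0 // add1n.
  exact: subtree_size_par.
have size_pv : INR (subtree_size par (par v)) = desc_count (par v) + 1.
  by rewrite /desc_count minus_INR /=; [lra | apply/leP/subtree_size_gt0].
have W_gt0 := width_gt0 (par v); have s_ge1 := INR_subtree_size_ge1 v.
rewrite /potential size_pv; have := coord_bound_ge1 (width (par v)).
set s := INR (subtree_size par v) in s_le s_ge1 *; set D := desc_count (par v) in D_gt0 s_le *.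
set W := width (par v) in W_gt0 * => bound_ge1 ->.
suff : s * coord_bound (W * (s / D)) <= D * coord_bound W by nra.
have -> : coord_bound (W * (s / D)) = Rmax 1 (D * (PI / (2 * W)) / s).
  by rewrite /coord_bound; congr Rmax; field; lra.
apply: (Rmax_case_strong 1 (D * (PI / (2 * W)) / s) (fun z => s * z <= D * coord_bound W)) => _.
  by nra.
have -> : s * (D * (PI / (2 * W)) / s) = D * (PI / (2 * W)) by field; lra.
by apply: Rmult_le_compat_l; [lra | apply: Rmax_r].
Qed.

(* The potential turns the coordinate bound of each edge into a telescoping sum along root paths. *)
Lemma coord_bounds_potential x : x != r ->
  [/\ Rabs (xcoord x) <= INR #|V| / 2 - potential x + coord_bound (width x), 0 < ycoord x
    & ycoord x <= INR #|V| / 2 - potential x + coord_bound (width x)].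
Proof.
elim/parent_ind: x => [|x x_nr IH _]; first by rewrite eqxx.
have [polar dx_le dy_le] := edge_spec x_nr; rewrite -/(width x) in dx_le dy_le.
have dy_gt0 : 0 < ycoord x - ycoord (par x).
  by have := polar_in_dot polar (@angles_sin_gt0 x); lra.
have : Rabs (xcoord x) <= Rabs (xcoord (par x)) + Rabs (xcoord x - xcoord (par x)).
  by have := Rabs_triang (xcoord (par x)) (xcoord x - xcoord (par x)); rewrite Rplus_minus.
have [px_root|px_nr] := eqVneq (par x) r.
  have [x_r y_r] := pos_root; have := potential_root_child x_nr px_root.
  by rewrite px_root x_r y_r Rabs_R0 in dx_le dy_le dy_gt0 *; split; lra.
by have [? ? ?] := IH px_nr; have := potential_par x_nr px_nr; split; lra.
Qed.

Lemma coord_bounds x : Rabs (xcoord x) <= INR #|V| / 2 /\ 0 <= ycoord x <= INR #|V| / 2.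
Proof.
have [->|x_nr] := eqVneq x r.
  by have [-> ->] := pos_root; rewrite Rabs_R0; have := pos_INR #|V|; lra.
have [? ? ?] := coord_bounds_potential x_nr.
have : coord_bound (width x) <= potential x.
  by rewrite /potential; have := INR_subtree_size_ge1 x; have := coord_bound_ge1 (width x); nra.
lra.
Qed.

Definition rltb (x y : R) : bool := if Rlt_dec x y then true else false.

Lemma rltbP x y : reflect (x < y) (rltb x y).
Proof. by rewrite /rltb; case: Rlt_dec => lt_xy; constructor. Qed.

Definition rising p q : rel V := fun a b => adj a b && rltb (proj p q a) (proj p q b).

Lemma rising_path_monotone p q u s : path (rising p q) u s -> path adj u s /\ monotone_path pos u s.
Proof.
move=> rise_s; split; first by apply: sub_path rise_s => a b /andP[].
exists p, q => i lt_is /=; move/(pathP u): rise_s => /(_ i lt_is) /andP[_ /rltbP].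
by rewrite /proj /xcoord /ycoord; lra.
Qed.

Lemma rising_path_down p q x z : fconnect par x z ->
  (forall y, fconnect par x y -> fconnect par y z -> y != z ->
     forall th, a1 y < th < a2 y -> 0 < p * cos th + q * sin th) ->
  exists s, path (rising p q) z s /\ last z s = x.
Proof.
move=> xz dir_gt0; have [k [xz_k k_min]] := ex_minimal_iter xz.
rewrite -xz_k; apply: path_iter_down => i lt_ik.
have y_nr := iter_neq_root xz_k k_min lt_ik.
rewrite /rising par_adj //; apply/rltbP/proj_par_lt => //.
apply: dir_gt0; [exact: fconnect_iter | | exact: k_min].
by rewrite -xz_k fconnect_iter_le // ltnW.
Qed.

Lemma rising_path_up p q x z : fconnect par x z ->
  (forall y, fconnect par x y -> fconnect par y z -> y != z ->
     forall th, a1 y < th < a2 y -> 0 < - p * cos th + - q * sin th) ->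
  exists s, path (rising p q) x s /\ last x s = z.
Proof.
move=> xz dir_gt0; have [k [xz_k k_min]] := ex_minimal_iter xz.
rewrite -xz_k; apply: path_iter_up => i lt_ik.
have y_nr := iter_neq_root xz_k k_min lt_ik.
rewrite /rising adj_par //; apply/rltbP.
suff : proj (- p) (- q) (par (iter i par x)) < proj (- p) (- q) (iter i par x).
  by rewrite !proj_opp; lra.
apply: proj_par_lt => //; apply: dir_gt0; [exact: fconnect_iter | | exact: k_min].
by rewrite -xz_k fconnect_iter_le // ltnW.
Qed.

(* From u climb to the fork w of u and v, then descend to v, rising in a direction
   separating the angle intervals of the two children of w on the way. *)
Lemma monotone : monotone_drawing adj pos.
Proof.
move=> u v; suff [p [q [s [rise_s last_s]]]] : exists p q s, path (rising p q) u s /\ last u s = v.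
  by exists s; have [] := rising_path_monotone rise_s.
case: (lineageP u v) => [vu|uv|w c1 c2 neq_c12 c1_nr c2_nr pc1 pc2 uc1 vc2].
- exists 0, 1; apply: rising_path_down vu _ => y _ _ _ th; exact: angles_sin_gt0.
- exists 0, (-1); apply: rising_path_up uv _ => y _ _ _ th /angles_sin_gt0; lra.
have [p [q [dir1 dir2]]] := sibling_separating_dir neq_c12 c1_nr c2_nr (etrans pc1 (esym pc2)).
have uw : fconnect par u w by rewrite -pc1 (connect_trans uc1 (fconnect_par c1)).
have vw : fconnect par v w by rewrite -pc2 (connect_trans vc2 (fconnect_par c2)).
have [s1 [rise1 last1]] : exists s, path (rising p q) u s /\ last u s = w.
  apply: rising_path_up uw _ => y uy yw neq_y th th_range.
  have yc1 : fconnect par y c1 by apply: fconnect_below_child uc1 uy _ _; rewrite pc1.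
  have [? ?] := desc_angles_sub yc1.
  by apply: dir1; lra.
have [s2 [rise2 last2]] : exists s, path (rising p q) w s /\ last w s = v.
  apply: rising_path_down vw _ => y vy yw neq_y th th_range.
  have yc2 : fconnect par y c2 by apply: fconnect_below_child vc2 vy _ _; rewrite pc2.
  have [? ?] := desc_angles_sub yc2.
  by apply: dir2; lra.
by exists p, q, (s1 ++ s2); rewrite cat_path last_cat last1 rise1 rise2.
Qed.

Lemma rpt_pos v : rpt (pos v) = (xcoord v, ycoord v).
Proof. by []. Qed.

Lemma ycoord_par_lt v : v != r -> ycoord (par v) < ycoord v.
Proof. by move=> v_nr; have := proj_par_lt v_nr (@angles_sin_gt0 v); rewrite /proj; lra. Qed.

Lemma ycoord_desc_lt x y : fconnect par x y -> x != y -> ycoord y < ycoord x.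
Proof.
move: x; apply: ancestor_ind => [|x neq_xy px_y IH _]; first by rewrite eqxx.
have x_nr := desc_neq_root (connect_trans (fconnect_par x) px_y) neq_xy.
have [<-|neq_pxy] := eqVneq (par x) y; first exact: ycoord_par_lt.
by have := IH neq_pxy; have := ycoord_par_lt x_nr; lra.
Qed.

(* Edges are handled as pairs (par v, v); a crossing is then ruled out by projecting
   on the y-axis (nested edges) or on a direction separating two sibling subtrees. *)
Lemma edges_meet_desc v1 v2 z : v1 != r -> v2 != r -> v1 != v2 -> fconnect par v2 v1 ->
  on_segment z (rpt (pos (par v1))) (rpt (pos v1)) ->
  on_segment z (rpt (pos (par v2))) (rpt (pos v2)) -> z = rpt (pos v1) /\ par v2 = v1.
Proof.
move=> v1_nr v2_nr neq_v12 v21 seg1 seg2.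
have pv2_v1 : fconnect par (par v2) v1 by apply: fconnect_par_neq; rewrite // eq_sym.
have ycoord_le : ycoord v1 <= ycoord (par v2).
  have [<-|neq] := eqVneq (par v2) v1; first lra.
  by have := ycoord_desc_lt pv2_v1 neq; lra.
have z_ge : ycoord (par v2) <= dotp 0 1 z.
  have := ycoord_par_lt v2_nr => lt_pv2.
  by apply: (on_segment_dotp_ge (W := ycoord (par v2)) seg2); rewrite rpt_pos /dotp /=; lra.
have [z_v1 _] := on_segment_dotp_max (p := 0) (q := 1) (W := ycoord v1) (on_segment_sym seg1)
  ltac:(rewrite rpt_pos /dotp /=; lra)
  ltac:(rewrite rpt_pos /dotp /=; have := ycoord_par_lt v1_nr; lra) ltac:(lra).
split => //; apply/eqP; apply: contraT => neq.
by have := ycoord_desc_lt pv2_v1 neq; move: z_ge; rewrite z_v1 rpt_pos /dotp /=; lra.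
Qed.

Lemma dotp_pos p q v : dotp p q (rpt (pos v)) = proj p q v.
Proof. by []. Qed.

Lemma edges_meet_fork v1 v2 w c1 c2 z : c1 != c2 -> c1 != r -> c2 != r ->
  par c1 = w -> par c2 = w -> fconnect par v1 c1 -> fconnect par v2 c2 ->
  on_segment z (rpt (pos (par v1))) (rpt (pos v1)) ->
  on_segment z (rpt (pos (par v2))) (rpt (pos v2)) ->
  [/\ z = rpt (pos w), par v1 = w & par v2 = w].
Proof.
move=> neq_c12 c1_nr c2_nr pc1 pc2 v1c1 v2c2 seg1 seg2.
have [p [q [dir1 dir2]]] := sibling_separating_dir neq_c12 c1_nr c2_nr (etrans pc1 (esym pc2)).
have below1 x : fconnect par x c1 -> proj p q x < proj p q w.
  by move=> xc1; have := proj_desc_gt c1_nr dir1 xc1; rewrite pc1 !proj_opp; lra.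
have above2 x : fconnect par x c2 -> proj p q w < proj p q x.
  by move=> xc2; have := proj_desc_gt c2_nr dir2 xc2; rewrite pc2.
have par_below1 : par v1 != w -> proj p q (par v1) < proj p q w.
  move=> neq; apply/below1/fconnect_par_neq => //.
  by apply: contraNneq neq => ->; rewrite pc1.
have par_above2 : par v2 != w -> proj p q w < proj p q (par v2).
  move=> neq; apply/above2/fconnect_par_neq => //.
  by apply: contraNneq neq => ->; rewrite pc2.
have le_par1 : proj p q (par v1) <= proj p q w.
  by have [->|/par_below1] := eqVneq (par v1) w; lra.
have ge_par2 : proj p q w <= proj p q (par v2).
  by have [->|/par_above2] := eqVneq (par v2) w; lra.
have lt_v1 := below1 _ v1c1; have gt_v2 := above2 _ v2c2.
have z_ge : proj p q w <= dotp p q z.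
  by apply: (on_segment_dotp_ge (W := proj p q w) seg2); rewrite dotp_pos; lra.
have z_le : - proj p q w <= dotp (- p) (- q) z.
  by apply: (on_segment_dotp_ge (W := - proj p q w) seg1); rewrite dotp_pos proj_opp; lra.
have [z_pv1 eq1] := on_segment_dotp_max (p := p) (q := q) (W := proj p q w) seg1
  ltac:(rewrite dotp_pos; lra) ltac:(rewrite dotp_pos; lra) z_ge.
have [_ eq2] := on_segment_dotp_max (p := - p) (q := - q) (W := - proj p q w) seg2
  ltac:(rewrite dotp_pos proj_opp; lra) ltac:(rewrite dotp_pos proj_opp; lra) z_le.
rewrite dotp_pos in eq1; rewrite dotp_pos proj_opp in eq2.
have pv1_w : par v1 = w by apply/eqP; apply: contraT => /par_below1; lra.
have pv2_w : par v2 = w by apply/eqP; apply: contraT => /par_above2; lra.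
by rewrite z_pv1 pv1_w.
Qed.

Lemma pos_inj : injective pos.
Proof.
move=> a b eq_ab; have eq_y : ycoord a = ycoord b by rewrite /ycoord eq_ab.
case: (lineageP a b) => [ba|ab|w c1 c2 neq_c12 c1_nr c2_nr pc1 pc2 ac1 bc2].
- by apply/eqP; rewrite eq_sym; apply: contraT => neq; have := ycoord_desc_lt ba neq; lra.
- by apply/eqP; apply: contraT => neq; have := ycoord_desc_lt ab neq; lra.
have [p [q [dir1 dir2]]] := sibling_separating_dir neq_c12 c1_nr c2_nr (etrans pc1 (esym pc2)).
have := proj_desc_gt c1_nr dir1 ac1; have := proj_desc_gt c2_nr dir2 bc2.
by rewrite pc1 pc2 !proj_opp /proj /xcoord /ycoord eq_ab; lra.
Qed.

Lemma edge_as_par_edge a b z : adj a b -> on_segment z (rpt (pos a)) (rpt (pos b)) ->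
  exists v, [/\ v != r, (a = par v /\ b = v) \/ (a = v /\ b = par v)
              & on_segment z (rpt (pos (par v))) (rpt (pos v))].
Proof.
move=> ab seg; case: (adj_parent tree adj_par ab) => [[b_nr a_pb]|[a_nr b_pa]].
  by exists b; split => //; [left | rewrite -a_pb].
by exists a; split => //; [right | rewrite -b_pa; apply: on_segment_sym].
Qed.

Lemma planar : planar_drawing adj pos.
Proof.
split; first exact: pos_inj.
move=> a b c d z ab cd neq_edges seg_ab seg_cd.
have [v1 [v1_nr ends1 seg1]] := edge_as_par_edge ab seg_ab.
have [v2 [v2_nr ends2 seg2]] := edge_as_par_edge cd seg_cd.
suff [u [u1 u2 ->]] : exists u, [/\ u = par v1 \/ u = v1, u = par v2 \/ u = v2 & z = rpt (pos u)].
  exists u; split; last split => //.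
  - by case: ends1 => [[-> ->]|[-> ->]]; tauto.
  - by case: ends2 => [[-> ->]|[-> ->]]; tauto.
have neq_v12 : v1 != v2.
  apply/eqP => eq_v12; apply: neq_edges; rewrite -eq_v12 in ends2.
  by case: ends1 => [[-> ->]|[-> ->]]; case: ends2 => [[-> ->]|[-> ->]]; tauto.
case: (lineageP v1 v2) => [v21|v12|w c1 c2 neq_c12 c1_nr c2_nr pc1 pc2 v1c1 v2c2].
- have [-> pv2] := edges_meet_desc v1_nr v2_nr neq_v12 v21 seg1 seg2.
  by exists v1; rewrite pv2; split; [right | left | ].
- have [-> pv1] := edges_meet_desc v2_nr v1_nr (ltac:(by rewrite eq_sym)) v12 seg2 seg1.
  by exists v2; rewrite pv1; split; [left | right | ].
have [-> pv1 pv2] := edges_meet_fork neq_c12 c1_nr c2_nr pc1 pc2 v1c1 v2c2 seg1 seg2.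
by exists w; rewrite pv1 pv2; split; try left.
Qed.

Lemma coord_bounds_Z v : let m := ((#|V| - odd #|V|) %/ 2)%N in
  (Z.abs (pos v).1 <= Z.of_nat m)%Z /\ (0 <= (pos v).2 <= Z.of_nat m)%Z.
Proof.
have [x_le [y_ge0 y_le]] := coord_bounds v; rewrite /xcoord /ycoord in x_le y_ge0 y_le.
have x_ge := Rle_abs (- IZR (pos v).1); rewrite Rabs_Ropp in x_ge.
have x_le' := Rle_abs (IZR (pos v).1).
have := half_floor_bound (n := #|V|) (z := (- (pos v).1)%Z) ltac:(rewrite opp_IZR; lra).
have := half_floor_bound (n := #|V|) (z := (pos v).1) ltac:(lra).
have := half_floor_bound (n := #|V|) (z := (pos v).2) ltac:(lra).
by have := le_IZR _ _ y_ge0; lia.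
Qed.

End Drawing.

End Angles.

End RootedTree.

Lemma fits_grid_of_bounds (V : finType) (pos : V -> Z * Z) n :
  let m := ((n - odd n) %/ 2)%N in
  (forall v, (Z.abs (pos v).1 <= Z.of_nat m)%Z /\ (0 <= (pos v).2 <= Z.of_nat m)%Z) ->
  if odd n then fits_grid pos n ((n + 1) %/ 2) else fits_grid pos (n + 1) (n %/ 2 + 1).
Proof.
move=> m bounds; have n_eq := half_sub_oddE n; rewrite -/m in n_eq; clearbody m.
case: (odd n) n_eq => /= n_eq; exists (- Z.of_nat m)%Z, 0%Z => v; have [x_b y_b] := bounds v.
- have -> : ((n + 1) %/ 2 = m + 1)%N by rewrite n_eq -addnA -[1 + 1]/(1 * 2) -mulnDl mulnK.
  by rewrite n_eq -!plusE -!multE; lia.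
- have -> : (n %/ 2 = m)%N by rewrite n_eq addn0 mulnK.
  by rewrite n_eq -!plusE -!multE; lia.
Qed.

Theorem theorem5 (V : finType) (adj : rel V) (pos : V -> Z * Z) :
  is_tree adj -> algorithm2_drawing adj pos ->
  let n := #|V| in
  [/\ monotone_drawing adj pos,
      planar_drawing adj pos,
      (forall v : V,
          (Z.abs (pos v).1 <= Z.of_nat ((n - odd n) %/ 2))%Z /\
          (0 <= (pos v).2 <= Z.of_nat ((n - odd n) %/ 2))%Z)
    & (if odd n then fits_grid pos n ((n + 1) %/ 2)
       else fits_grid pos (n + 1) (n %/ 2 + 1))].
Proof.
move=> tree [r [par [ch [a1 [a2 [gravity rooted ch_order angles placed]]]]]] n.
have [par_root [adj_par reach_root]] := rooted.
have bounds := coord_bounds_Z par_root reach_root ch_order angles tree adj_par gravity placed.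
split.
- exact (monotone par_root reach_root ch_order angles tree adj_par placed).
- exact (planar par_root reach_root ch_order angles tree adj_par placed).
- exact: bounds.
- exact: fits_grid_of_bounds bounds.
Qed.
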